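(* Let $k\in\mathbb{R}_{\ge 0}$ and let $G$ be a graph on $n\ge 2$ vertices such that every subgraph $H\subseteq G$ with $|V(H)|\ge 3$ satisfies $|E(H)|\le k(|V(H)|-2)$. If $G$ admits an interval colouring, then $t(G)\le \frac{k}{2}n+1-k$.
   Context: An interval colouring of a graph $G$ is a proper edge-colouring $c\colon E(G)\to\mathbb{N}$ such that for every vertex $v$, the set of colours on edges incident to $v$ is a set of consecutive integers. For an interval colourable graph $G$, $t(G)$ denotes the greatest number of distinct colours used in an interval colouring of $G$. *)

From mathcomp Require Import all_boot all_order all_algebra.
From mathcomp Require Export reals.
Set Implicit Arguments. Unset Strict Implicit. Unset Printing Implicit Defensive.

Definition simple_graph (T : finType) (g : rel T) : Prop :=
  irreflexive g /\ symmetric g.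

Definition edges (T : finType) (g : rel T) : {set {set T}} :=
  [set e : {set T} | [exists x, exists y, (x != y) && g x y && (e == [set x; y])]].

(* Proper edge colouring with colours in nat (only values on edges matter). *)
Definition proper_edge_colouring (T : finType) (g : rel T) (c : {set T} -> nat) : Prop :=
  forall e f, e \in edges g -> f \in edges g -> e != f -> ~~ [disjoint e & f] ->
    c e != c f.

Definition colours_at (T : finType) (g : rel T) (c : {set T} -> nat) (v : T) : seq nat :=
  [seq c e | e <- enum (edges g) & v \in (e : {set T})].

Definition consecutive (s : seq nat) : Prop :=
  forall a b m, a \in s -> b \in s -> a <= m -> m <= b -> m \in s.

Definition interval_colouring (T : finType) (g : rel T) (c : {set T} -> nat) : Prop :=
  proper_edge_colouring g c /\ forall v, consecutive (colours_at g c v).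

Definition num_colours (T : finType) (g : rel T) (c : {set T} -> nat) : nat :=
  size (undup [seq c e | e <- enum (edges g)]).

From mathcomp Require Import all_boot all_order all_algebra.
From mathcomp Require Import reals.
From mathcomp Require Import zify ring lra.
Import Order.TTheory GRing.Theory Num.Theory.
Set Implicit Arguments. Unset Strict Implicit. Unset Printing Implicit Defensive.

(* For a window [p, q] of colours let C be the set of colours in the window
   that are used, and V the set of vertices incident to an edge with such a
   colour; we show 2 (|C| - 1) <= k (|V| - 2) whenever C is nonempty, by
   induction on q - p.  If some colour x, strictly between two other colours
   of C, is used by a single edge e, the windows [p, x] and [x, q] share only
   the colour x and, by the interval property at each vertex, only the two
   vertices of e, so the two inequalities add up.  Otherwise every colour of C
   except the least and the greatest is used at least twice, so the edges of
   the window number at least 2 (|C| - 1) and the density hypothesis applies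
   to them.  The whole colour range gives t(G) <= k (n - 2) / 2 + 1. *)

Section Edges.

Variables (T : finType) (g : rel T).

Lemma card_edge e : e \in edges g -> #|e| = 2.
Proof.
rewrite inE => /existsP [x /existsP [y /andP [/andP [xy _] /eqP ->]]].
by rewrite cards2 xy.
Qed.

Lemma card_setU_edges e1 e2 :
  e1 \in edges g -> e2 \in edges g -> e1 != e2 -> 3 <= #|e1 :|: e2|.
Proof.
move=> E1 E2; rewrite leqNgt; apply: contra => small.
have := cardsUI e1 e2; rewrite (card_edge E1) (card_edge E2) => card12.
have /eqP/setIidPl sub12 : e1 :&: e2 == e1 by rewrite eqEcard subsetIl (card_edge E1); lia.
by rewrite eqEcard sub12 (card_edge E1) (card_edge E2).
Qed.

End Edges.

Section Windows.

Variables (T : finType) (g : rel T) (c : {set T} -> nat).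

(* Colours of edges are cast into 'I_ncolours so that sets of colours are
   finite sets; the cast is exact on edges (colourE). *)
Definition ncolours : nat := (\max_(e in edges g) c e).+1.

Definition colour (e : {set T}) : 'I_ncolours := inord (c e).

Lemma colourE e : e \in edges g -> colour e = c e :> nat.
Proof. by move=> E; rewrite /colour inordK // ltnS (leq_bigmax_cond (F := c) _ E). Qed.

Definition colour_class (i : 'I_ncolours) : {set {set T}} :=
  [set e in edges g | colour e == i].

Definition window_colours (p q : nat) : {set 'I_ncolours} :=
  [set i | [exists e in edges g, colour e == i] && (p <= i <= q)].

Definition window_edges (p q : nat) : {set {set T}} :=
  [set e in edges g | p <= c e <= q].

Definition window_vertices (p q : nat) : {set T} :=
  \bigcup_(e in window_edges p q) e.

Lemma window_colour_edge p q i :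
  i \in window_colours p q -> exists2 e, e \in window_edges p q & e \in colour_class i.
Proof.
rewrite inE => /andP [/existsP [e /andP [E /eqP <-]] pq].
by exists e; rewrite inE E ?eqxx // -colourE.
Qed.

Lemma window_edges_sub p q : window_edges p q \subset edges g.
Proof. by apply/subsetP => e /setIdP []. Qed.

Lemma sub_window_vertices p q e : e \in window_edges p q -> e \subset window_vertices p q.
Proof. exact: bigcup_sup. Qed.

Lemma card_window_vertices_ge2 p q :
  0 < #|window_colours p q| -> 2 <= #|window_vertices p q|.
Proof.
case/card_gt0P => i /window_colour_edge [e W _].
have E : e \in edges g by move: W; rewrite inE => /andP [].
by rewrite -(card_edge E) subset_leq_card // sub_window_vertices.
Qed.

Lemma card_window_vertices_ge3 p q :
  1 < #|window_colours p q| -> 3 <= #|window_vertices p q|.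
Proof.
case/card_gt1P => i [j [/window_colour_edge [e1 W1]]].
rewrite inE => /andP [E1 /eqP <-] /window_colour_edge [e2 W2].
rewrite inE => /andP [E2 /eqP <-] ne12.
have e1e2 : e1 != e2 by apply: contraNneq ne12 => ->.
apply: leq_trans (card_setU_edges E1 E2 e1e2) _.
by rewrite subset_leq_card // subUset !sub_window_vertices.
Qed.

Lemma card_window_edges p q :
  #|window_edges p q| = \sum_(i in window_colours p q) #|colour_class i|.
Proof.
rewrite -sum1_card (partition_big colour (mem (window_colours p q))) /=; last first.
  move=> e; rewrite inE => /andP [E pq]; rewrite inE colourE // pq andbT.
  by apply/existsP; exists e; rewrite E eqxx.
apply: eq_bigr => i; rewrite inE => /andP [_ pq]; rewrite sum1dep_card.
apply: eq_card => e; rewrite !in_set -andbA; apply: andb_id2l => E.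
have Eg : e \in edges g by rewrite inE.
case: eqP => [ci|_]; last by rewrite andbF.
by rewrite -ci (colourE Eg) in pq; rewrite pq.
Qed.

Lemma window_coloursU p x q :
  p <= x <= q -> window_colours p q = window_colours p x :|: window_colours x q.
Proof.
move=> /andP [px xq]; apply/setP => i; rewrite !inE -andb_orr.
by congr (_ && _); apply/idP/idP; [case: (leqP i x) => ? ? | case/orP]; lia.
Qed.

Lemma window_coloursI p q x :
  x \in window_colours p q -> window_colours p x :&: window_colours x q = [set x].
Proof.
rewrite inE => /andP [used /andP [px xq]]; apply/setP => i; rewrite !inE.
case: (eqVneq i x) => [->|]; first by rewrite used px xq leqnn.
rewrite -val_eqE => ne; apply/negbTE; apply: contra ne => /and4P [/and3P [_ _ ix] _ xi _].
by rewrite eqn_leq ix xi.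
Qed.

Lemma window_edgesU p x q :
  p <= x <= q -> window_edges p q = window_edges p x :|: window_edges x q.
Proof.
move=> /andP [px xq]; apply/setP => e; rewrite !inE -andb_orr.
by congr (_ && _); apply/idP/idP; [case: (leqP (c e) x) => ? ? | case/orP]; lia.
Qed.

Lemma window_verticesU p x q :
  p <= x <= q -> window_vertices p q = window_vertices p x :|: window_vertices x q.
Proof. by move=> pxq; rewrite /window_vertices (window_edgesU pxq) bigcup_setU. Qed.

Definition splitting_colour p q (x : 'I_ncolours) :=
  [&& x \in window_colours p q, #|colour_class x| == 1,
      [exists y in window_colours p q, y < x] &
      [exists z in window_colours p q, x < z]].

Lemma card_window_edges_ge p q :
  0 < #|window_colours p q| ->
  ~~ [exists x, splitting_colour p q x] ->
  2 * (#|window_colours p q| - 1) <= #|window_edges p q|.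
Proof.
set C := window_colours p q => /card_gt0P [x0 Cx0] no_split.
pose lo := [arg min_(i < x0 in C) (i : nat)].
pose hi := [arg max_(i > x0 in C) (i : nat)].
have [Clo lo_min] : lo \in C /\ forall j, j \in C -> lo <= j.
  by rewrite /lo; case: arg_minnP.
have [Chi hi_max] : hi \in C /\ forall j, j \in C -> j <= hi.
  by rewrite /hi; case: arg_maxnP.
have indicator a : a \in C -> \sum_(i in C) (i == a : nat) = 1.
  by move=> Ca; rewrite (bigD1 a) //= eqxx big1 // => i /andP [_ /negbTE ->].
have used_twice i : i \in C -> 2 <= #|colour_class i| + (i == lo) + (i == hi).
  move=> Ci; have [e _ ce] := window_colour_edge Ci.
  have pos : 0 < #|colour_class i| by apply/card_gt0P; exists e.
  case: eqVneq => [_|ne_lo]; first lia; case: eqVneq => [_|ne_hi]; first lia.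
  rewrite !addn0; have [//|once] := ltnP 1 #|colour_class i|.
  case/existsP: no_split; exists i; rewrite /splitting_colour Ci eqn_leq once pos /=.
  apply/andP; split; [apply/existsP; exists lo | apply/existsP; exists hi].
  - by rewrite Clo ltn_neqAle lo_min // val_eqE eq_sym ne_lo.
  - by rewrite Chi ltn_neqAle hi_max // val_eqE ne_hi.
have : \sum_(i in C) 2 <= \sum_(i in C) (#|colour_class i| + (i == lo) + (i == hi)).
  exact: leq_sum.
rewrite !big_split /= sum_nat_const.
by rewrite !indicator // -card_window_edges mulnBr muln1 mulnC leq_subLR addn1 addn1 addnC addn2.
Qed.

Lemma window_colours_split p q x :
  x \in window_colours p q ->
  x \in window_colours p x /\ x \in window_colours x q.
Proof. by rewrite !inE leqnn => /and3P [-> -> ->]. Qed.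

Lemma card_window_colours_split p q x :
  x \in window_colours p q ->
  #|window_colours p q| + 1 = #|window_colours p x| + #|window_colours x q|.
Proof.
move=> Cx; move: (Cx); rewrite inE => /and3P [_ px xq].
by rewrite -cardsUI -window_coloursU ?px // (window_coloursI Cx) cards1.
Qed.

Lemma splitting_colour_inside p q x : splitting_colour p q x -> p < x < q.
Proof.
case/and4P => _ _ /existsP [y /andP [Cy yx]] /existsP [z /andP [Cz xz]].
move: Cy Cz; rewrite !inE => /and3P [_ py _] /and3P [_ _ zq].
apply/andP; split; lia.
Qed.

Hypothesis interval : interval_colouring g c.

Lemma interval_colouring_between v e1 e2 m :
  e1 \in edges g -> e2 \in edges g -> v \in e1 -> v \in e2 -> c e1 <= m -> m <= c e2 ->
  exists e, [/\ e \in edges g, v \in e & c e = m].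
Proof.
move=> E1 E2 V1 V2 le1 le2.
have at_v e : e \in edges g -> v \in e -> c e \in colours_at g c v.
  by move=> E V; apply/mapP; exists e; rewrite // mem_filter V mem_enum.
have := interval.2 v _ _ _ (at_v _ E1 V1) (at_v _ E2 V2) le1 le2.
by case/mapP => e; rewrite mem_filter mem_enum => /andP [V E] ->; exists e.
Qed.

Lemma window_verticesI p q x e0 :
  x \in window_colours p q -> colour_class x = [set e0] ->
  window_vertices p x :&: window_vertices x q = e0.
Proof.
rewrite inE => /andP [_ /andP [px xq]] class_x.
have /setIdP [E0 /eqP col0] : e0 \in colour_class x by rewrite class_x set11.
have c0 : c e0 = x by rewrite -col0 colourE.
apply/setP => v; rewrite inE; apply/andP/idP => [[]|V].
- move=> /bigcupP [e1 /setIdP [E1 /andP [_ le1]] V1] /bigcupP [e2 /setIdP [E2 /andP [le2 _]] V2].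
  have [e [E V ce]] := interval_colouring_between E1 E2 V1 V2 le1 le2.
  have : e \in colour_class x by apply/setIdP; rewrite -val_eqE /= colourE // ce.
  by rewrite class_x inE => /eqP <-.
- by split; apply/bigcupP; exists e0 => //; apply/setIdP; rewrite E0 c0 leqnn ?px ?xq.
Qed.

Lemma card_window_vertices_split p q x :
  splitting_colour p q x ->
  #|window_vertices p q| + 2 = #|window_vertices p x| + #|window_vertices x q|.
Proof.
case/and4P => Cx /cards1P [e0 class_x] _ _; move: (Cx); rewrite inE => /and3P [_ px xq].
have /setIdP [E0 _] : e0 \in colour_class x by rewrite class_x set11.
by rewrite -cardsUI -window_verticesU ?px // (window_verticesI Cx class_x) (card_edge E0).
Qed.

End Windows.

Arguments splitting_colour {T} g c p q x.

Section Bound.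

Variables (R : realType) (k : R) (T : finType) (g : rel T) (c : {set T} -> nat).
Local Open Scope ring_scope.

Hypothesis k_ge0 : 0 <= k.
Hypothesis sparse : forall (S : {set T}) (F : {set {set T}}),
  F \subset edges g -> (forall e, e \in F -> e \subset S) ->
  (3 <= #|S|)%N -> (#|F|%:R : R) <= k * (#|S|%:R - 2).
Hypothesis interval : interval_colouring g c.

Local Notation C p q := #|window_colours g c p q|.
Local Notation V p q := #|window_vertices g c p q|.

Lemma window_bound_nosplit p q :
  (1 < C p q)%N -> ~~ [exists x, splitting_colour g c p q x] ->
  2 * ((C p q)%:R - 1) <= k * ((V p q)%:R - 2).
Proof.
move=> C_gt1 no_split.
have edges_ge := card_window_edges_ge (ltnW C_gt1) no_split.
have := sparse (@window_edges_sub _ g c p q) (@sub_window_vertices _ g c p q)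
  (card_window_vertices_ge3 C_gt1).
rewrite -(ler_nat R) natrM (natrB _ (ltnW C_gt1)) in edges_ge.
by move=> dens; apply: le_trans dens.
Qed.

Lemma window_bound p q :
  (0 < C p q)%N -> 2 * ((C p q)%:R - 1) <= k * ((V p q)%:R - 2).
Proof.
have [n] := ubnP (q - p); elim: n p q => // n IH p q lt_n C_gt0.
have V_ge2 : 2 <= (V p q)%:R :> R by rewrite (ler_nat R 2) card_window_vertices_ge2.
have [C_le1|C_gt1] := leqP (C p q) 1.
  have -> : C p q = 1%N by apply/eqP; rewrite eqn_leq C_le1.
  by rewrite subrr mulr0 mulr_ge0 // subr_ge0.
have [|no_split] := boolP [exists x, splitting_colour g c p q x]; last first.
  exact: window_bound_nosplit.
move=> /existsP [x split_x]; have /andP [px xq] := splitting_colour_inside split_x.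
have /andP [Cx _] := split_x; have [Cpx Cxq] := window_colours_split Cx.
have left := IH p x ltac:(lia) (introT card_gt0P (ex_intro _ x Cpx)).
have right := IH x q ltac:(lia) (introT card_gt0P (ex_intro _ x Cxq)).
have splitC := card_window_colours_split Cx.
have splitV := card_window_vertices_split interval split_x.
have -> : (C p q)%:R = (C p x)%:R + (C x q)%:R - 1 :> R.
  by rewrite -natrD -splitC natrD addrK.
have -> : (V p q)%:R = (V p x)%:R + (V x q)%:R - 2 :> R.
  by rewrite -natrD -splitV natrD addrK.
lra.
Qed.

End Bound.

Lemma num_colours_window (T : finType) (g : rel T) (c : {set T} -> nat) :
  num_colours g c = #|window_colours g c 0 (ncolours g c)|.
Proof.
rewrite /num_colours.
have -> : [seq c e | e <- enum (edges g)] = [seq nat_of_ord (colour g c e) | e <- enum (edges g)].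
  by apply/eq_in_map => e; rewrite mem_enum => /colourE ->.
rewrite map_comp undup_map_inj; last exact: ord_inj.
rewrite size_map -(card_uniqP (undup_uniq _)).
apply: eq_card => i; rewrite mem_undup inE /= ltnW ?ltn_ord // andbT.
apply/mapP/existsP => [[e]|[e /andP [E /eqP <-]]]; last by exists e; rewrite ?mem_enum.
by rewrite mem_enum => E ->; exists e; rewrite E eqxx.
Qed.

Local Open Scope ring_scope.

Theorem theorem4 (R : realType) (k : R) (T : finType) (g : rel T) :
  simple_graph g -> 0 <= k -> (2 <= #|T|)%N ->
  (forall (S : {set T}) (F : {set {set T}}),
      F \subset edges g -> (forall e, e \in F -> e \subset S) ->
      (3 <= #|S|)%N -> (#|F|%:R : R) <= k * (#|S|%:R - 2)) ->
  forall c : {set T} -> nat, interval_colouring g c ->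
    ((num_colours g c)%:R : R) <= k / 2 * (#|T|%:R) + 1 - k.
Proof.
move=> _ k_ge0 T_ge2 sparse c interval.
have -> : k / 2 * #|T|%:R + 1 - k = k * (#|T|%:R - 2) / 2 + 1 by field.
have slack : 0 <= k * (#|T|%:R - 2) by rewrite mulr_ge0 // subr_ge0 (ler_nat R 2).
rewrite num_colours_window; set t := #|window_colours _ _ _ _|.
have [t0|t_gt0] := posnP t; first by rewrite t0; lra.
have := window_bound k_ge0 sparse interval t_gt0.
have : k * ((#|window_vertices g c 0 (ncolours g c)|)%:R - 2) <= k * (#|T|%:R - 2).
  by rewrite ler_wpM2l // lerD2r ler_nat max_card.
lra.
Qed.
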